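(* Let $A_1,\dots,A_m\in\mathbb R^{n\times n}$ and $z\in\mathbb R^n$. For any integer $l\ge1$ let $h^l:\mathbb R^{n\circ l}\to\mathbb R$, \[ h^l(\mathbf w)=\sum_{a_1,\dots,a_l\in[m]}\Big(\sum_{i,j\in[n]^l}\Big(\prod_{k=1}^l (A_{a_k})_{i_kj_k}\Big)\big(w_{i_1\dots i_l}w_{j_1\dots j_l}-z_{i_1}\cdots z_{i_l}z_{j_1}\cdots z_{j_l}\big)\Big)^2 . \] Then for every $l\ge1$, $z^{\otimes l}$ is a second-order point of $h^l$, i.e. $\nabla h^l(z^{\otimes l})=0$ and $\nabla^2h^l(z^{\otimes l})\succeq0$; no RSC or RSS assumption is needed.
   Context: $\mathbb R^{n\circ l}$ denotes $l$-way tensors of size $n\times\cdots\times n$; $z^{\otimes l}$ is the tensor with entries $z_{i_1}\cdots z_{i_l}$. $z$ is the ground truth of the rank-1 matrix sensing problem $\min_{x\in\mathbb R^n}\sum_a\langle A_a,xx^\top-zz^\top\rangle^2$, and $h^l$ is its lifted version. *)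

From HB Require Import structures.
From mathcomp Require Import all_boot all_order all_algebra.
From mathcomp Require Import all_classical all_reals all_analysis.
Set Implicit Arguments. Unset Strict Implicit. Unset Printing Implicit Defensive.
Import Order.TTheory GRing.Theory Num.Theory.
Import numFieldNormedType.Exports.
Local Open Scope ring_scope.

Definition midx (n l : nat) := {ffun 'I_l -> 'I_n}.

(* The space R^{n o l} of l-way tensors, represented as row vectors indexed
   (via enum_rank) by multi-indices. *)
Definition tdim (n l : nat) : nat := #|{: midx n l}|.
Definition tensor (R : realType) (n l : nat) := 'rV[R]_(tdim n l).

Definition tentry (R : realType) (n l : nat) (w : tensor R n l) (i : midx n l) : R :=
  w 0 (enum_rank i).

Definition tpow (R : realType) (n l : nat) (z : 'rV[R]_n) : tensor R n l :=
  \row_(p < tdim n l) \prod_(k < l) z 0 (enum_val p k).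

Definition hl (R : realType) (n m l : nat) (A : 'I_m -> 'M[R]_n) (z : 'rV[R]_n)
    (w : tensor R n l) : R :=
  \sum_(a : {ffun 'I_l -> 'I_m})
    (\sum_(i : midx n l) \sum_(j : midx n l)
       (\prod_(k < l) A (a k) (i k) (j k)) *
       (tentry w i * tentry w j
        - (\prod_(k < l) z 0 (i k)) * (\prod_(k < l) z 0 (j k)))) ^+ 2.

Definition ebasis (R : realType) (N : nat) (p : 'I_N) : 'rV[R]_N := delta_mx 0 p.

Definition gradient (R : realType) (N : nat) (f : 'rV[R]_N -> R) (x : 'rV[R]_N)
  : 'rV[R]_N := \row_(p < N) ('D_(ebasis R p) f) x.

Definition hessian (R : realType) (N : nat) (f : 'rV[R]_N -> R) (x : 'rV[R]_N)
  : 'M[R]_N := \matrix_(p < N, q < N) ('D_(ebasis R p) ('D_(ebasis R q) f)) x.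

Definition psd (R : realType) (N : nat) (H : 'M[R]_N) : Prop :=
  forall v : 'rV[R]_N, 0 <= (v *m H *m v^T) 0 0.

Definition second_order_point (R : realType) (N : nat) (f : 'rV[R]_N -> R)
  (x : 'rV[R]_N) : Prop :=
  gradient f x = 0 /\ psd (hessian f x).

(* The lifted objective is a sum of squares, h^l(w) = sum_a r_a(w)^2, of
   residuals r_a that are quadratic in w and all vanish at z^(x)l.  For any
   sum of squares of twice differentiable functions with a common zero x0,
   the gradient 2 sum_a r_a(x0) grad r_a(x0) vanishes, and in the Hessian the
   terms r_a(x0) Hess r_a(x0) drop out, leaving the sum of Gram matrices
   2 sum_a grad r_a(x0)^T grad r_a(x0), which is positive semidefinite.
   Nothing about the sensing matrices A_a is used. *)

From HB Require Import structures.
From mathcomp Require Import all_boot all_order all_algebra.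
From mathcomp Require Import all_classical all_reals all_analysis.
From mathcomp Require Import ring.
Import Order.TTheory GRing.Theory Num.Theory.
Import numFieldNormedType.Exports.
Local Open Scope ring_scope.

Section DeriveInstances.
Variable R : realType.

Global Instance is_derive_coord (p q : nat) (x v : 'M[R]_(p, q)) i j :
  is_derive x v (fun M : 'M[R]_(p, q) => M i j) (v i j).
Proof.
apply: DeriveDef; first exact/diff_derivable/differentiable_coord.
have := @derive_mx R _ p q id x v (@derivable_id R _ x v).
by rewrite derive_id => /matrixP/(_ i j); rewrite mxE.
Qed.

Global Instance is_derive_bigsum (V : normedModType R) (I : finType)
    (F : I -> V -> R) (dF : I -> R) (x v : V) :
  (forall i, is_derive x v (F i) (dF i)) ->
  is_derive x v (fun w => \sum_i F i w) (\sum_i dF i).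
Proof.
move=> dF_F; rewrite (_ : (fun w => _) = \sum_i F i); last first.
  by apply/funext => w; rewrite fct_sumE.
by elim/big_ind2: _ => // *; [exact: is_derive_cst | exact: is_deriveD].
Qed.

Global Instance is_derive_sqr (V : normedModType R) (f : V -> R) (x v : V) df :
  is_derive x v f df -> is_derive x v (fun w => f w ^+ 2) (2 * f x * df).
Proof.
move=> df_f; rewrite (_ : (fun w => _) = fun w => f w * f w).
  by apply: is_derive_eq; rewrite -scalerDl -mulr2n mulr_natl.
by apply/funext => w; rewrite expr2.
Qed.

End DeriveInstances.

Section PositiveSemidefinite.
Variables (R : realType) (N : nat).
Implicit Types (H K : 'M[R]_N).

Lemma psdD H K : psd H -> psd K -> psd (H + K).
Proof.
by move=> psdH psdK v; rewrite mulmxDr mulmxDl mxE addr_ge0.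
Qed.

Lemma psd_sum (I : finType) (H : I -> 'M[R]_N) :
  (forall i, psd (H i)) -> psd (\sum_i H i).
Proof.
move=> psdH; elim/big_ind: _ => //; last exact: psdD.
by move=> v; rewrite mulmx0 mul0mx mxE.
Qed.

Lemma psdZ (c : R) H : 0 <= c -> psd H -> psd (c *: H).
Proof.
by move=> c_ge0 psdH v; rewrite -scalemxAr -scalemxAl mxE mulr_ge0.
Qed.

Lemma psd_gram (k : nat) (M : 'M[R]_(k, N)) : psd (M^T *m M).
Proof.
move=> v; have -> : v *m (M^T *m M) *m v^T = (v *m M^T) *m (v *m M^T)^T.
  by rewrite trmx_mul trmxK !mulmxA.
set u := v *m M^T.
by rewrite mxE sumr_ge0 // => j _; rewrite [u^T _ _]mxE -expr2 sqr_ge0.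
Qed.

End PositiveSemidefinite.

Definition sum_of_squares {R : realType} {N : nat} {J : finType}
    (r : J -> 'rV[R]_N -> R) (w : 'rV[R]_N) : R :=
  \sum_a r a w ^+ 2.

Section SumOfSquares.
Variables (R : realType) (N : nat) (J : finType) (r : J -> 'rV[R]_N -> R).
Hypothesis r_derivable : forall a x v, derivable (r a) x v.
Hypothesis Dr_derivable : forall a x u v, derivable ('D_v (r a)) x u.

Let f := sum_of_squares r.

Lemma derive_sum_of_squares v y :
  'D_v f y = \sum_a 2 * r a y * 'D_v (r a) y.
Proof.
have dr a := derivableP (r_derivable a y v).
exact: derive_val.
Qed.

Variable x0 : 'rV[R]_N.
Hypothesis r_x0 : forall a, r a x0 = 0.

Lemma gradient_sum_of_squares : gradient f x0 = 0.
Proof.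
apply/rowP => p; rewrite !mxE derive_sum_of_squares.
by apply: big1 => a _; rewrite r_x0 mulr0 mul0r.
Qed.

Lemma hessian_sum_of_squares :
  hessian f x0 = \sum_a 2 *: ((gradient (r a) x0)^T *m gradient (r a) x0).
Proof.
apply/matrixP => p q; rewrite !mxE summxE (funext (derive_sum_of_squares _)).
have r_p := derivableP (r_derivable _ x0 (ebasis R p)).
have Dr_p := derivableP (Dr_derivable _ x0 (ebasis R p) (ebasis R q)).
apply: derive_val; apply: is_derive_eq; apply: eq_bigr => a _.
rewrite r_x0 !mxE big_ord1 !mxE /GRing.scale /=.
by ring.
Qed.

Lemma second_order_point_sum_of_squares : second_order_point f x0.
Proof.
split; first exact: gradient_sum_of_squares.
rewrite hessian_sum_of_squares; apply: psd_sum => a.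
exact/psdZ/psd_gram.
Qed.

End SumOfSquares.

Section LiftedSensing.
Variables (R : realType) (n m l : nat) (A : 'I_m -> 'M[R]_n) (z : 'rV[R]_n).
Notation tensor := (tensor R n l).
Notation index := (midx n l).
Notation sensing_index := {ffun 'I_l -> 'I_m}.

Definition lifted_coef (a : sensing_index) (i j : index) : R :=
  \prod_(k < l) A (a k) (i k) (j k).

Definition lifted_residual (a : sensing_index) (w : tensor) : R :=
  \sum_i \sum_j lifted_coef a i j *
    (tentry w i * tentry w j - (\prod_(k < l) z 0 (i k)) * \prod_(k < l) z 0 (j k)).

Definition lifted_residual_diff (a : sensing_index) (x v : tensor) : R :=
  \sum_i \sum_j lifted_coef a i j * (tentry x i * tentry v j + tentry x j * tentry v i).

Lemma hl_sum_of_squares : hl A z = sum_of_squares lifted_residual.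
Proof. by []. Qed.

Lemma lifted_residual_tpow a : lifted_residual a (tpow l z) = 0.
Proof.
apply: big1 => i _; apply: big1 => j _.
by rewrite /tentry !mxE !enum_rankK subrr mulr0.
Qed.

Global Instance is_derive_tentry (x v : tensor) (i : index) :
  is_derive x v (fun w : tensor => tentry w i) (tentry v i).
Proof. exact: is_derive_coord. Qed.

Global Instance is_derive_lifted_residual a (x v : tensor) :
  is_derive x v (lifted_residual a) (lifted_residual_diff a x v).
Proof.
apply: is_derive_eq; apply: eq_bigr => i _; apply: eq_bigr => j _.
by rewrite /GRing.scale /=; ring.
Qed.

Global Instance is_derive_lifted_residual_diff a (x u v : tensor) :
  is_derive x u (lifted_residual_diff a ^~ v) (lifted_residual_diff a u v).
Proof.
apply: is_derive_eq; apply: eq_bigr => i _; apply: eq_bigr => j _.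
by rewrite /GRing.scale /=; ring.
Qed.

Lemma derive_lifted_residual a (v : tensor) :
  'D_v (lifted_residual a) = lifted_residual_diff a ^~ v.
Proof. by apply/funext => x; rewrite derive_val. Qed.

End LiftedSensing.

Theorem theorem5p7 (R : realType) (n m : nat) (A : 'I_m -> 'M[R]_n)
  (z : 'rV[R]_n) (l : nat) :
  (0 < l)%N ->
  second_order_point (hl A z (l:=l)) (tpow l z).
Proof.
move=> _; rewrite hl_sum_of_squares.
apply: second_order_point_sum_of_squares => [a x v | a x u v | a].
- exact: ex_derive.
- by rewrite derive_lifted_residual; exact: ex_derive.
- exact: lifted_residual_tpow.
Qed.
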